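(* Let $M\ge1$ and $n\ge2$ be integers, $d\in\{1,\dots,n-1\}$, and $0<p<1$. Let $c_1,\dots,c_n$ be independent Bernoulli($p$) bits (the tagged code word), and let $U_1,\dots,U_n$ be random bits, independent of each other and of the $c_i$, with $\Pr(U_i=0)=(1-p)^M$ for $i\le d$ and $\Pr(U_i=0)=(1-p)^{M-1}$ for $i>d$. Say position $i$ is covered if $c_i=0$, or $U_i=1$, or ($i>d$ and $c_{i-d}=1$). Then \[\Pr(\text{every position } i\in\{1,\dots,n\}\text{ is covered})\le\big(1-p(1-p)^M\big)^n.\]
   Context: This models a tagged code word covered by its own copy shifted by $d$ positions together with the other active users: $U_i$ is the Boolean OR of the bits of the other active users at position $i$ ($M$ of them at positions $i\le d$, $M-1$ at positions $i>d$), each of these bits being independently $1$ with probability $p$. *)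

From mathcomp Require Import all_boot all_order all_algebra.
Set Implicit Arguments. Unset Strict Implicit. Unset Printing Implicit Defensive.
Import Order.TTheory GRing.Theory Num.Theory.
Local Open Scope ring_scope.

(* Positions 1..n of the paper are represented 0-based by i : 'I_n
   (paper position i+1).  Paper "i <= d" becomes "i < d" (0-based),
   paper "i > d" becomes "d <= i", and paper c_{i-d} becomes c (i-d). *)

Definition bern_weight (R : pzRingType) (n : nat) (p : R) (c : {ffun 'I_n -> bool}) : R :=
  \prod_(i < n) (if c i then p else 1 - p).

Definition probU0 (R : pzRingType) (M n d : nat) (p : R) (i : 'I_n) : R :=
  if (i < d)%N then (1 - p) ^+ M else (1 - p) ^+ (M.-1).

Definition U_weight (R : pzRingType) (M n d : nat) (p : R) (U : {ffun 'I_n -> bool}) : R :=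
  \prod_(i < n) (if U i then 1 - probU0 M d p i else probU0 M d p i).

(* Position i is covered: c_i = 0, or U_i = 1, or (i > d and c_{i-d} = 1);
   the last clause is written as "some j with j + d = i has c j = 1". *)
Definition covered (n d : nat) (c U : {ffun 'I_n -> bool}) (i : 'I_n) : bool :=
  [|| ~~ c i, U i | [exists j : 'I_n, (j + d == i)%N && c j]].

Definition prob_all_covered (R : pzRingType) (M n d : nat) (p : R) : R :=
  \sum_(c : {ffun 'I_n -> bool}) \sum_(U : {ffun 'I_n -> bool})
     (if [forall i, covered d c U i] then bern_weight p c * U_weight M d p U else 0).

From mathcomp Require Import all_boot all_order all_algebra.
From mathcomp Require Import ring.
Set Implicit Arguments. Unset Strict Implicit. Unset Printing Implicit Defensive.
Import Order.TTheory GRing.Theory Num.Theory.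
Local Open Scope ring_scope.

(* Summing out U leaves, for each position i with c_i = 1, the conditional
   coverage probability 1 if c_{i-d} = 1, 1 - (1-p)^(M-1) if c_{i-d} = 0, and
   1 - (1-p)^M if i has no predecessor.  The positions split into chains
   i, i + d, i + 2d, ...  Conditioning on the last bit c_k of a chain whose
   predecessor is j gives the recurrence Q_A = Q_(A-k) - x Q_(A-k-j) with
   x = p (1-p)^M, and Q_(A-k) <= Q_(A-k-j) because removing the end j of a
   chain only removes a factor at most 1.  Hence Q_A <= (1 - x) Q_(A-k), and
   the bound follows by peeling off the largest position n times. *)

Section BitUpdate.
Variable n : nat.
Local Notation word := {ffun 'I_n -> bool}.

Definition set_bit (c : word) (k : 'I_n) (x : bool) : word :=
  [ffun i => if i == k then x else c i].

Lemma set_bitE c k x i : set_bit c k x i = if i == k then x else c i.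
Proof. by rewrite ffunE. Qed.

Lemma set_bitK c k x y : set_bit (set_bit c k x) k y = set_bit c k y.
Proof. by apply/ffunP => i; rewrite !set_bitE; case: (i == k). Qed.

Lemma set_bit_id c k : set_bit c k (c k) = c.
Proof. by apply/ffunP => i; rewrite set_bitE; case: eqP => // ->. Qed.

Lemma sum_split_bit (V : nmodType) (F : word -> V) k :
  \sum_(c : word) F c =
  \sum_(c : word | ~~ c k) (F (set_bit c k true) + F (set_bit c k false)).
Proof.
pose flip c := set_bit c k (~~ c k).
have flipK : involutive flip.
  by move=> c; rewrite /flip set_bitE eqxx negbK set_bitK set_bit_id.
rewrite big_split /= (bigID (fun c : word => c k)) /=; congr (_ + _).
  rewrite (reindex_inj (inv_inj flipK)) /=.
  apply: eq_big => [c|c]; rewrite /flip set_bitE eqxx // => /negbTE ck.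
  by rewrite ck.
by apply: eq_bigr => c /negbTE ck; rewrite -ck set_bit_id.
Qed.

End BitUpdate.

Section Bernoulli.
Variables (R : comPzRingType) (n : nat) (p : R).
Local Notation word := {ffun 'I_n -> bool}.

Lemma bern_weight_set_bit c k x : bern_weight p (set_bit c k x) =
  (if x then p else 1 - p) * \prod_(i < n | i != k) (if c i then p else 1 - p).
Proof.
rewrite /bern_weight (bigD1 k) //= set_bitE eqxx; congr (_ * _).
by apply: eq_bigr => i /negbTE ik; rewrite set_bitE ik.
Qed.

Lemma sum_bern_weight : \sum_(c : word) bern_weight p c = 1.
Proof.
rewrite -(bigA_distr_bigA (fun (_ : 'I_n) (x : bool) => if x then p else 1 - p)).
by rewrite big1 // => i _; rewrite big_bool /= addrC subrK.
Qed.

Lemma bern_condition_bit (F : word -> R) k :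
  \sum_(c : word) bern_weight p c * F c =
  \sum_(c : word) bern_weight p c *
    (p * F (set_bit c k true) + (1 - p) * F (set_bit c k false)).
Proof.
rewrite (sum_split_bit _ k) [RHS](sum_split_bit _ k); apply: eq_bigr => c _.
by rewrite !set_bitK !bern_weight_set_bit; ring.
Qed.

End Bernoulli.

Lemma bern_weight_ge0 (R : numDomainType) n (p : R) (c : {ffun 'I_n -> bool}) :
  0 <= p <= 1 -> 0 <= bern_weight p c.
Proof.
by case/andP=> p0 p1; apply: prodr_ge0 => i _; case: (c i); rewrite ?subr_ge0.
Qed.

Section Chains.
Variables (R : realFieldType) (n d : nat) (p v : R).
Hypotheses (d_gt0 : (0 < d)%N) (p_ge0 : 0 <= p) (p_le1 : p <= 1)
  (v_ge0 : 0 <= v) (v_le1 : v <= 1).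
Local Notation word := {ffun 'I_n -> bool}.

(* [v] is Pr(U_i = 0) at a position with a predecessor and [(1 - p) * v] at
   a chain start; the factor is Pr(i covered | c) for i in A, where the
   predecessors are looked up in A only. *)
Definition cover_factor (A : {set 'I_n}) (c : word) (i : 'I_n) : R :=
  if ~~ c i || [exists j in A, (j + d == i)%N && c j] then 1
  else if [exists j in A, (j + d == i)%N] then 1 - v else 1 - (1 - p) * v.

Definition chain_prob (A : {set 'I_n}) : R :=
  \sum_(c : word) bern_weight p c * \prod_(i in A) cover_factor A c i.

Definition chain_end (A : {set 'I_n}) (k : 'I_n) :=
  forall i, i \in A -> (k + d != i)%N.

Let q_ge0 : 0 <= 1 - p. Proof. by rewrite subr_ge0. Qed.
Let qv_ge0 : 0 <= (1 - p) * v. Proof. exact: mulr_ge0. Qed.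
Let qv_le1 : (1 - p) * v <= 1.
Proof. by rewrite mulr_ile1 // lerBlDr lerDl. Qed.

Lemma cover_factor_ge0 (A : {set 'I_n}) (c : word) i : 0 <= cover_factor A c i.
Proof. by rewrite /cover_factor; do !case: ifP => _; rewrite ?subr_ge0. Qed.

Lemma cover_factor_le1 (A : {set 'I_n}) (c : word) i : cover_factor A c i <= 1.
Proof. by rewrite /cover_factor; do !case: ifP => _; rewrite ?gerBl. Qed.

Lemma cover_factor_unset (A : {set 'I_n}) (c : word) k :
  cover_factor A (set_bit c k false) k = 1.
Proof. by rewrite /cover_factor set_bitE eqxx. Qed.

Lemma cover_factor_set_bit (A : {set 'I_n}) (c : word) (k : 'I_n) x i :
  i != k -> k \notin A -> cover_factor A (set_bit c k x) i = cover_factor A c i.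
Proof.
move=> ik kA; rewrite /cover_factor set_bitE (negbTE ik).
congr (if _ || _ then _ else _); apply: eq_existsb => j.
by rewrite set_bitE; case: (j =P k) => [->|//]; rewrite (negbTE kA).
Qed.

Lemma exists_setD1 (A : {set 'I_n}) (k i : 'I_n) (P : pred 'I_n) :
  chain_end A k -> i \in A -> (forall j, P j -> (j + d == i)%N) ->
  [exists j in A :\ k, P j] = [exists j in A, P j].
Proof.
move=> endk iA Pi; apply/existsP/existsP => -[j /andP[jA Pj]]; exists j.
  by move: jA; rewrite in_setD1 => /andP[_ ->].
rewrite in_setD1 jA Pj !andbT; apply/eqP => jk.
by move: (endk i iA); rewrite -jk Pi.
Qed.

Lemma cover_factor_setD1 (A : {set 'I_n}) (k : 'I_n) (c : word) i :
  chain_end A k -> i \in A -> cover_factor (A :\ k) c i = cover_factor A c i.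
Proof.
move=> endk iA; rewrite /cover_factor.
by rewrite (exists_setD1 endk iA) ?(exists_setD1 endk iA) // => j /andP[].
Qed.

Lemma prod_cover_factor_end (A : {set 'I_n}) (k : 'I_n) (c : word) x :
  k \in A -> chain_end A k ->
  \prod_(i in A) cover_factor A (set_bit c k x) i =
  cover_factor A (set_bit c k x) k * \prod_(i in A :\ k) cover_factor (A :\ k) c i.
Proof.
move=> kA endk; rewrite (bigD1 k) //=; congr (_ * _).
rewrite [RHS](eq_bigl (fun i => (i \in A) && (i != k))) => [|i]; last first.
  by rewrite in_setD1 andbC.
apply: eq_bigr => i /andP[iA ik].
by rewrite -(cover_factor_setD1 _ endk iA) cover_factor_set_bit // setD11.
Qed.

Lemma chain_prob_set0 : chain_prob set0 = 1.
Proof.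
rewrite /chain_prob -[RHS](@sum_bern_weight _ n p); apply: eq_bigr => c _.
by rewrite big_pred0 ?mulr1 // => i; rewrite in_set0.
Qed.

Lemma chain_prob_setD1_end (A : {set 'I_n}) (k : 'I_n) :
  k \in A -> chain_end A k -> chain_prob A <= chain_prob (A :\ k).
Proof.
move=> kA endk; apply: ler_sum => c _.
have := prod_cover_factor_end c (c k) kA endk; rewrite set_bit_id => ->.
rewrite ler_wpM2l ?bern_weight_ge0 ?p_ge0 //.
apply: ler_piMl (cover_factor_le1 _ _ _).
exact/prodr_ge0/(fun i _ => cover_factor_ge0 _ c i).
Qed.

Lemma pred_neq (j k : 'I_n) : (j + d == k)%N -> j != k.
Proof. by apply: contraTneq => ->; rewrite -{2}[val k]addn0 eqn_add2l -lt0n d_gt0. Qed.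

Lemma chain_end_setD1 (A : {set 'I_n}) (k j : 'I_n) :
  (j + d == k)%N -> chain_end (A :\ k) j.
Proof. by move=> /eqP jk i; rewrite in_setD1 jk eq_sym => /andP[]. Qed.

Lemma chain_prob_start (A : {set 'I_n}) (k : 'I_n) :
  k \in A -> chain_end A k -> ~~ [exists j in A, (j + d == k)%N] ->
  chain_prob A = (1 - p * ((1 - p) * v)) * chain_prob (A :\ k).
Proof.
move=> kA endk nopred; rewrite /chain_prob (bern_condition_bit p _ k) mulr_sumr.
apply: eq_bigr => c _; rewrite !prod_cover_factor_end // /cover_factor !set_bitE eqxx /=.
have -> : [exists j in A, (j + d == k)%N && set_bit c k true j] = false.
  apply: contraNF nopred => /existsP[j /and3P[jA jdk _]].
  by apply/existsP; exists j; rewrite jA.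
by rewrite (negbTE nopred); ring.
Qed.

Lemma chain_prob_succ (A : {set 'I_n}) (k j : 'I_n) :
  k \in A -> j \in A -> (j + d == k)%N -> chain_end A k ->
  chain_prob A = chain_prob (A :\ k) - p * ((1 - p) * v) * chain_prob (A :\ k :\ j).
Proof.
move=> kA jA jdk endk.
have jk := pred_neq jdk.
have endj := chain_end_setD1 (A := A) jdk.
have jAk : j \in A :\ k by rewrite in_setD1 jk jA.
have cover_k c : cover_factor A (set_bit c k true) k = if c j then 1 else 1 - v.
  rewrite /cover_factor set_bitE eqxx /=.
  have -> : [exists i in A, (i + d == k)%N] by apply/existsP; exists j; rewrite jA jdk.
  suff -> : [exists i in A, (i + d == k)%N && set_bit c k true i] = c j by [].
  apply/existsP/idP => [[i /and3P[_ idk]]|cj]; last first.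
    by exists j; rewrite jA jdk set_bitE (negbTE jk).
  move: jdk; rewrite -(eqP idk) eqn_add2r => /eqP/val_inj <-.
  by rewrite set_bitE (negbTE jk).
pose S := \sum_(c : word) bern_weight p c *
  ((if c j then 0 else 1) * \prod_(i in A :\ k) cover_factor (A :\ k) c i).
have -> : chain_prob A = chain_prob (A :\ k) - p * v * S.
  rewrite /chain_prob /S (bern_condition_bit p _ k) mulr_sumr -sumrB.
  apply: eq_bigr => c _; rewrite !prod_cover_factor_end // cover_k cover_factor_unset.
  by case: (c j); ring.
have -> : S = (1 - p) * chain_prob (A :\ k :\ j).
  rewrite /S (bern_condition_bit p _ j) /chain_prob mulr_sumr; apply: eq_bigr => c _.
  rewrite !set_bitE eqxx /= !(prod_cover_factor_end _ _ jAk endj) cover_factor_unset.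
  by ring.
by ring.
Qed.

Lemma chain_prob_step (A : {set 'I_n}) (k : 'I_n) :
  k \in A -> chain_end A k -> chain_prob A <= (1 - p * ((1 - p) * v)) * chain_prob (A :\ k).
Proof.
move=> kA endk; have [/existsP[j /andP[jA jdk]]|nopred] :=
  boolP [exists j in A, (j + d == k)%N]; last by rewrite (chain_prob_start kA endk nopred).
have jAk : j \in A :\ k by rewrite in_setD1 pred_neq.
have mono := chain_prob_setD1_end jAk (chain_end_setD1 (A := A) jdk).
have x0 : 0 <= p * ((1 - p) * v) by exact: mulr_ge0.
rewrite (chain_prob_succ kA jA jdk endk); set x := p * _ in x0 *.
by rewrite mulrBl mul1r lerD2l lerN2 ler_wpM2l.
Qed.

Lemma chain_end_max (A : {set 'I_n}) (k : 'I_n) :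
  (forall i, i \in A -> (i <= k)%N) -> chain_end A k.
Proof.
move=> kmax i /kmax; apply: contraTneq => <-.
by rewrite -ltnNge -{1}[val k]addn0 ltn_add2l.
Qed.

Lemma chain_prob_le (A : {set 'I_n}) :
  chain_prob A <= (1 - p * ((1 - p) * v)) ^+ #|A|.
Proof.
have x1 : 0 <= 1 - p * ((1 - p) * v) by rewrite subr_ge0 mulr_ile1.
move cardA: #|A| => m; elim: m A cardA => [|m IH] A cardA.
  by rewrite (cards0_eq cardA) chain_prob_set0 expr0.
have [k0 k0A] : exists k, k \in A by apply/set0Pn; rewrite -card_gt0 cardA.
case: (arg_maxnP (fun i : 'I_n => val i) k0A) => k kA' kmax.
have kA : k \in A := kA'.
have cardAk : #|A :\ k| = m by move: cardA; rewrite (cardsD1 k) kA => -[].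
apply: le_trans (chain_prob_step kA (chain_end_max kmax)) _.
by rewrite exprS ler_wpM2l // IH.
Qed.

End Chains.

Section Coverage.
Variables (R : realFieldType) (M n d : nat) (p : R).
Hypothesis M_gt0 : (0 < M)%N.
Local Notation word := {ffun 'I_n -> bool}.

Lemma exists_pred (i : 'I_n) : [exists j : 'I_n, (j + d == i)%N] = (d <= i)%N.
Proof.
apply/existsP/idP => [[j /eqP <-]|di]; first exact: leq_addl.
have lt_n : (i - d < n)%N by exact: leq_ltn_trans (leq_subr d i) (ltn_ord i).
by exists (Ordinal lt_n); rewrite /= subnK.
Qed.

Lemma sum_U_covered (c : word) :
  \sum_(U : word) (if [forall i, covered d c U i] then U_weight M d p U else 0) =
  \prod_(i in [set: 'I_n]) cover_factor d p ((1 - p) ^+ M.-1) setT c i.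
Proof.
pose h i (u : bool) := if covered d c [ffun=> u] i
  then (if u then 1 - probU0 M d p i else probU0 M d p i) else 0.
have covered_ffun U i : covered d c U i = covered d c [ffun=> U i] i.
  by rewrite /covered ffunE.
rewrite (eq_bigr (fun U : word => \prod_i h i (U i))) => [|U _]; last first.
  case: forallP => [allcov | /forallP/forallPn[i0]]; last first.
    by rewrite (bigD1 i0) //= /h -covered_ffun => /negbTE ->; rewrite mul0r.
  by apply: eq_bigr => i _; rewrite /h -covered_ffun allcov.
rewrite -bigA_distr_bigA; apply: eq_big => [i|i _]; first by rewrite in_setT.
have exT (P : pred 'I_n) : [exists j in [set: 'I_n], P j] = [exists j, P j].
  by apply: eq_existsb => j; rewrite in_setT.
rewrite big_bool /h /cover_factor /covered !ffunE /= orbT !exT exists_pred /probU0.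
case: (_ || _) => /=; first by rewrite subrK.
by rewrite addr0 -exprS prednK //; case: ltnP.
Qed.

Lemma prob_all_covered_chain_prob :
  prob_all_covered M n d p = chain_prob d p ((1 - p) ^+ M.-1) [set: 'I_n].
Proof.
rewrite /prob_all_covered /chain_prob; apply: eq_bigr => c _.
rewrite -sum_U_covered mulr_sumr; apply: eq_bigr => U _.
by case: ifP; rewrite ?mulr0.
Qed.

End Coverage.

Theorem mainTheorem3 (R : realFieldType) (M n d : nat) (p : R) :
  (1 <= M)%N -> (2 <= n)%N -> (1 <= d)%N -> (d <= n - 1)%N -> 0 < p -> p < 1 ->
  prob_all_covered M n d p <= (1 - p * (1 - p) ^+ M) ^+ n.
Proof.
move=> M_gt0 _ d_gt0 _ p_gt0 p_lt1.
have q_ge0 : 0 <= 1 - p by rewrite subr_ge0 ltW.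
have q_le1 : 1 - p <= 1 by rewrite lerBlDr lerDl ltW.
rewrite prob_all_covered_chain_prob //.
have := chain_prob_le d_gt0 (ltW p_gt0) (ltW p_lt1) (exprn_ge0 M.-1 q_ge0)
  (exprn_ile1 M.-1 q_ge0 q_le1) [set: 'I_n].
by rewrite -exprS prednK // cardsT card_ord.
Qed.
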